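(* A set $S\subseteq\mathbb Z$ is $a$-nice for some $a\in\mathbb Z$ if and only if the following three conditions hold: (1) if $b\in S$ then $b-n\in S$; (2) $|S\cap\mathbb Z_{>0}|<\infty$; (3) $|\mathbb Z_{<0}\setminus S|<\infty$.
   Context: $\hat S_n$ is the affine symmetric group with generators $s_0,\dots,s_{n-1}$ (indices mod $n$). It acts on $\mathbb Z$ by $s_i(a)=a+1$ if $a\equiv i\pmod n$, $s_i(a)=a-1$ if $a\equiv i+1\pmod n$, and $s_i(a)=a$ otherwise; this induces an action on subsets of $\mathbb Z$. Let $\mathbb Z_{\le a}=\{b\in\mathbb Z: b\le a\}$. A subset $S\subseteq\mathbb Z$ is $a$-nice if $S=w(\mathbb Z_{\le a})$ for some $w\in\hat S_n$. *)

From Stdlib Require Import ZArith List.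
Open Scope Z_scope.

Definition s_act (n i a : Z) : Z :=
  if Z.eqb (a mod n) (i mod n) then a + 1
  else if Z.eqb (a mod n) ((i + 1) mod n) then a - 1
  else a.

(* A word [i1; ...; ik] in the generators acts as s_{i1} o ... o s_{ik}.
   Since each s_i is an involution, the group \hat S_n generated by the
   s_i consists exactly of the actions of such words. *)
Definition word_act (n : Z) (w : list Z) (a : Z) : Z :=
  fold_right (fun i x => s_act n i x) a w.

Definition valid_word (n : Z) (w : list Z) : Prop :=
  Forall (fun i => 0 <= i < n) w.

Definition Zle_set (a : Z) : Z -> Prop := fun b => b <= a.

Definition word_image (n : Z) (w : list Z) (T : Z -> Prop) : Z -> Prop :=
  fun y => exists x, T x /\ word_act n w x = y.

Definition nice (n a : Z) (S : Z -> Prop) : Prop :=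
  exists w, valid_word n w /\ forall y, S y <-> word_image n w (Zle_set a) y.

Definition finite_set (P : Z -> Prop) : Prop :=
  exists l : list Z, forall x, P x -> In x l.

From Stdlib Require Import ZArith List Lia Classical IndefiniteDescription.
Open Scope Z_scope.

(* Every generator s_i commutes with the translation b |-> b - n and moves each
   integer by at most 1, so w(Z_{<= a}) is stable under b |-> b - n and agrees
   with Z_{<= a} outside distance l(w) of a.  Conversely, such an S is described
   by its window: for each residue r the largest element m_r = r (mod n) of S,
   with S = {y | y <= m_(y mod n)}.  If m_(r-1) < m_r - 1 for some r, then
   s_(r-1) exchanges these two entries into m_r - 1 and m_(r-1) + 1, which
   strictly decreases sum_r m_r^2; otherwise S is closed under b |-> b - 1, so
   S = Z_{<= max_r m_r}. *)

Section Generators.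

Variable n : Z.
Hypothesis hn : 2 <= n.

Lemma mod_add_congr y z k : y mod n = z mod n -> (y + k) mod n = (z + k) mod n.
Proof. intros H. now rewrite Zplus_mod, H, <- Zplus_mod. Qed.

Lemma mod_succ_neq a : a mod n <> (a + 1) mod n.
Proof.
  intros H.
  pose proof (Z.div_mod a n ltac:(lia)); pose proof (Z.div_mod (a + 1) n ltac:(lia)).
  assert (E : n * ((a + 1) / n - a / n) = 1) by lia.
  destruct (Z_le_gt_dec ((a + 1) / n - a / n) 0); nia.
Qed.

Lemma s_act_succ i y : y mod n = i mod n -> s_act n i y = y + 1.
Proof. intros H. unfold s_act. now rewrite H, Z.eqb_refl. Qed.

Lemma s_act_pred i y : y mod n = (i + 1) mod n -> s_act n i y = y - 1.
Proof.
  intros H. unfold s_act. rewrite H, Z.eqb_refl.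
  destruct (Z.eqb_spec ((i + 1) mod n) (i mod n)) as [E|]; [|reflexivity].
  now destruct (mod_succ_neq i).
Qed.

Lemma s_act_fix i y :
  y mod n <> i mod n -> y mod n <> (i + 1) mod n -> s_act n i y = y.
Proof.
  intros H1 H2. unfold s_act.
  now destruct (Z.eqb_spec (y mod n) (i mod n)), (Z.eqb_spec (y mod n) ((i + 1) mod n)).
Qed.

Lemma s_act_involutive i y : s_act n i (s_act n i y) = y.
Proof.
  destruct (Z.eq_dec (y mod n) (i mod n)) as [Hi|Hi].
  - rewrite (s_act_succ i y Hi), s_act_pred; [lia|].
    now apply mod_add_congr.
  - destruct (Z.eq_dec (y mod n) ((i + 1) mod n)) as [Hs|Hs].
    + rewrite (s_act_pred i y Hs), s_act_succ; [lia|].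
      replace (y - 1) with (y + -1) by lia.
      replace (i mod n) with ((i + 1 + -1) mod n) by (f_equal; lia).
      exact (mod_add_congr y (i + 1) (-1) Hs).
    + now rewrite !(s_act_fix i y).
Qed.

Lemma s_act_sub_period i b : s_act n i (b - n) = s_act n i b - n.
Proof.
  unfold s_act.
  replace ((b - n) mod n) with (b mod n)
    by (replace (b - n) with (b + -1 * n) by ring; now rewrite Z_mod_plus_full).
  destruct (Z.eqb (b mod n) (i mod n)), (Z.eqb (b mod n) ((i + 1) mod n)); lia.
Qed.

Lemma s_act_dist i b : Z.abs (s_act n i b - b) <= 1.
Proof.
  unfold s_act.
  destruct (Z.eqb (b mod n) (i mod n)), (Z.eqb (b mod n) ((i + 1) mod n)); lia.
Qed.

Lemma word_act_sub_period w b : word_act n w (b - n) = word_act n w b - n.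
Proof. induction w as [|i w IH]; simpl; [reflexivity|]. now rewrite IH, s_act_sub_period. Qed.

Lemma word_act_dist w b : Z.abs (word_act n w b - b) <= Z.of_nat (length w).
Proof.
  induction w as [|i w IH]; simpl; [lia|].
  pose proof (s_act_dist i (word_act n w b)); lia.
Qed.

Lemma word_act_rev w b : word_act n w (word_act n (rev w) b) = b.
Proof.
  revert b; induction w as [|i w IH]; intros b; simpl; [reflexivity|].
  unfold word_act at 2; rewrite fold_right_app; simpl.
  fold (word_act n (rev w) (s_act n i b)).
  now rewrite IH, s_act_involutive.
Qed.

Lemma nice_s_act a i (S : Z -> Prop) :
  0 <= i < n -> nice n a (fun y => S (s_act n i y)) -> nice n a S.
Proof.
  intros Hi [w [Hw HS]]. exists (i :: w). split; [now constructor|].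
  intros y; split.
  - intros Hy. destruct (HS (s_act n i y)) as [[x [Hx Hxy]] _].
    { now rewrite s_act_involutive. }
    exists x. split; [exact Hx|]. simpl. fold (word_act n w x).
    now rewrite Hxy, s_act_involutive.
  - intros [x [Hx Hxy]]. simpl in Hxy. fold (word_act n w x) in Hxy.
    subst y. apply HS. now exists x.
Qed.

End Generators.

Lemma finite_set_subset (P Q : Z -> Prop) :
  (forall x, P x -> Q x) -> finite_set Q -> finite_set P.
Proof. intros H [l Hl]. exists l; auto. Qed.

Lemma finite_interval lo hi : finite_set (fun b => lo <= b <= hi).
Proof.
  exists (map (fun k => lo + Z.of_nat k) (seq 0 (Z.to_nat (hi - lo + 1)))).
  intros x Hx. apply in_map_iff. exists (Z.to_nat (x - lo)).
  split; [lia|]. apply in_seq. lia.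
Qed.

Lemma finite_set_bounded (P : Z -> Prop) :
  finite_set P -> exists B, forall x, P x -> Z.abs x <= B.
Proof.
  intros [l Hl].
  enough (exists B, forall x, In x l -> Z.abs x <= B) as [B HB]
    by (exists B; auto).
  clear Hl. induction l as [|a l [B HB]].
  - exists 0. intros x [].
  - exists (Z.max B (Z.abs a)). intros x [<-|Hx]; [lia|].
    specialize (HB x Hx). lia.
Qed.

Section Nice.

Variables (n a : Z) (S : Z -> Prop).
Hypotheses (hn : 2 <= n) (HS : nice n a S).

Lemma nice_sub_period b : S b -> S (b - n).
Proof.
  destruct HS as [w [_ Hw]]. intros Hb.
  apply Hw in Hb as [x [Hx <-]]. apply Hw.
  exists (x - n). split; [unfold Zle_set in *; lia|].
  apply word_act_sub_period.
Qed.

Lemma nice_finite_pos : finite_set (fun b => S b /\ 0 < b).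
Proof.
  destruct HS as [w [_ Hw]].
  apply finite_set_subset with (Q := fun b => 0 <= b <= a + Z.of_nat (length w));
    [|apply finite_interval].
  intros b [Hb Hpos]. apply Hw in Hb as [x [Hx <-]]. unfold Zle_set in Hx.
  pose proof (word_act_dist n w x). lia.
Qed.

Lemma nice_finite_neg_compl : finite_set (fun b => b < 0 /\ ~ S b).
Proof.
  destruct HS as [w [_ Hw]].
  apply finite_set_subset with (Q := fun b => a - Z.of_nat (length w) <= b <= 0);
    [|apply finite_interval].
  intros b [Hneg Hb].
  pose proof (word_act_dist n (rev w) b) as Hd. rewrite length_rev in Hd.
  assert (a < word_act n (rev w) b).
  { apply Z.nle_gt. intros Hle. apply Hb, Hw.
    exists (word_act n (rev w) b). split; [exact Hle|]. apply word_act_rev; lia. }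
  lia.
Qed.

End Nice.

Lemma Z_bounded_above_has_max (P : Z -> Prop) b U :
  P b -> (forall y, P y -> y <= U) -> exists M, P M /\ forall y, P y -> y <= M.
Proof.
  intros Hb HU.
  assert (H : forall d, 0 <= d -> forall b, P b -> U - b <= d ->
            exists M, P M /\ forall y, P y -> y <= M).
  { intros d Hd; pattern d; revert d Hd; apply natlike_ind.
    - intros c Hc Hd. exists c. split; [exact Hc|].
      intros y Hy. specialize (HU y Hy). lia.
    - intros d Hd IH c Hc Hcd.
      destruct (classic (exists y, P y /\ c < y)) as [[y [Hy Hcy]]|Hno].
      + apply (IH y Hy). lia.
      + exists c. split; [exact Hc|]. intros y Hy. apply Z.nlt_ge.
        intros Hcy. apply Hno. now exists y. }
  apply (H (Z.max 0 (U - b)) ltac:(lia) b Hb). lia.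
Qed.

Lemma Z_range_argmax (f : Z -> Z) j : 0 <= j ->
  exists r0, 0 <= r0 <= j /\ forall r, 0 <= r <= j -> f r <= f r0.
Proof.
  intros Hj; pattern j; revert j Hj; apply natlike_ind.
  - exists 0. split; [lia|]. intros r Hr. now replace r with 0 by lia.
  - intros j Hj [r0 [Hr0 Hmax]].
    destruct (Z_le_gt_dec (f (Z.succ j)) (f r0)).
    + exists r0. split; [lia|]. intros r Hr.
      destruct (Z.eq_dec r (Z.succ j)) as [->|]; [lia|]. apply Hmax. lia.
    + exists (Z.succ j). split; [lia|]. intros r Hr.
      destruct (Z.eq_dec r (Z.succ j)) as [->|]; [lia|].
      specialize (Hmax r ltac:(lia)). lia.
Qed.

Definition window_residues (n : Z) (m : Z -> Z) : Prop :=
  forall r, 0 <= r < n -> m r mod n = r.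

Definition window_of (n : Z) (m : Z -> Z) (S : Z -> Prop) : Prop :=
  forall y, S y <-> y <= m (y mod n).

Section WindowExists.

Variables (n : Z) (S : Z -> Prop).
Hypotheses (hn : 2 <= n) (Hper : forall b, S b -> S (b - n))
  (Hpos : finite_set (fun b => S b /\ 0 < b))
  (Hneg : finite_set (fun b => b < 0 /\ ~ S b)).

Lemma sub_multiple_closed b q : S b -> 0 <= q -> S (b - n * q).
Proof.
  intros Hb Hq; pattern q; revert q Hq; apply natlike_ind.
  - now replace (b - n * 0) with b by lia.
  - intros q Hq IH. replace (b - n * Z.succ q) with (b - n * q - n) by lia. auto.
Qed.

Lemma residue_class_max r : exists M,
  (M mod n = r mod n /\ S M) /\ forall y, y mod n = r mod n /\ S y -> y <= M.
Proof.
  destruct (finite_set_bounded _ Hpos) as [Bp HBp].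
  destruct (finite_set_bounded _ Hneg) as [Bn HBn].
  apply Z_bounded_above_has_max
    with (b := r mod n - n * (Z.abs Bn + 1)) (U := Z.abs Bp).
  - split.
    + replace (r mod n - n * (Z.abs Bn + 1)) with (r mod n + - (Z.abs Bn + 1) * n)
        by ring.
      rewrite Z_mod_plus_full. apply Z.mod_mod. lia.
    + pose proof (Z.mod_pos_bound r n ltac:(lia)).
      assert (Z.abs Bn <= n * Z.abs Bn) by (pose proof (Z.abs_nonneg Bn); nia).
      apply NNPP. intros Hb.
      assert (Hb0 : r mod n - n * (Z.abs Bn + 1) < 0) by nia.
      specialize (HBn _ (conj Hb0 Hb)). nia.
  - intros y [_ Hy]. destruct (Z_le_gt_dec y 0); [lia|].
    assert (Hy0 : 0 < y) by lia. specialize (HBp y (conj Hy Hy0)). lia.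
Qed.

Lemma window_exists : exists m, window_residues n m /\ window_of n m S.
Proof.
  destruct (functional_choice _ residue_class_max) as [m Hm].
  exists m. split.
  - intros r Hr. destruct (Hm r) as [[E _] _]. rewrite E. apply Z.mod_small. lia.
  - intros y. destruct (Hm (y mod n)) as [[E HSm] Hmax].
    rewrite Z.mod_mod in E, Hmax by lia.
    split; [intros Hy; now apply Hmax|intros Hle].
    assert (Hdiv : (n | m (y mod n) - y)).
    { apply Z.mod_divide; [lia|].
      rewrite Zminus_mod, E, Z.sub_diag. apply Z.mod_0_l. lia. }
    destruct Hdiv as [q Hq].
    replace y with (m (y mod n) - n * q) by lia.
    apply sub_multiple_closed; [exact HSm|nia].
Qed.

End WindowExists.

Lemma le_closed_of_pred_closed (P : Z -> Prop) a y :
  (forall z, P z -> P (z - 1)) -> P a -> y <= a -> P y.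
Proof.
  intros Hpred Ha Hy.
  assert (H : forall d, 0 <= d -> P (a - d)).
  { intros d Hd; pattern d; revert d Hd; apply natlike_ind.
    - now replace (a - 0) with a by lia.
    - intros d Hd IH. replace (a - Z.succ d) with (a - d - 1) by lia. auto. }
  replace y with (a - (a - y)) by lia. apply H. lia.
Qed.

Section WindowPredClosed.

Variables (n : Z) (m : Z -> Z) (S : Z -> Prop).
Hypotheses (hn : 2 <= n) (Hres : window_residues n m) (Hwin : window_of n m S)
  (Hpred : forall r, 0 <= r < n -> S (m r - 1)).

Lemma window_pred_closed z : S z -> S (z - 1).
Proof.
  intros Hz. apply Hwin in Hz. apply Hwin.
  pose proof (Z.mod_pos_bound z n ltac:(lia)) as Hq.
  pose proof (Hpred _ Hq) as Hm. apply Hwin in Hm.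
  assert (E : (m (z mod n) - 1) mod n = (z - 1) mod n).
  { apply (mod_add_congr n _ _ (-1)). now apply Hres. }
  rewrite E in Hm. lia.
Qed.

Lemma window_nice_of_pred_closed : exists a, nice n a S.
Proof.
  destruct (Z_range_argmax m (n - 1)) as [r0 [Hr0 Hmax]]; [lia|].
  exists (m r0), nil. split; [constructor|].
  intros y. unfold word_image, Zle_set; simpl. split.
  - intros Hy. exists y. split; [|reflexivity].
    apply Hwin in Hy. pose proof (Z.mod_pos_bound y n ltac:(lia)).
    specialize (Hmax (y mod n) ltac:(lia)). lia.
  - intros [x [Hx <-]]. apply le_closed_of_pred_closed with (m r0);
      [exact window_pred_closed| |exact Hx].
    apply Hwin. rewrite Hres by lia. lia.
Qed.

End WindowPredClosed.

Definition update (f : Z -> Z) (p v : Z) : Z -> Z :=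
  fun x => if x =? p then v else f x.

Fixpoint sum_sq (m : Z -> Z) (k : nat) : Z :=
  match k with
  | O => 0
  | S k => sum_sq m k + m (Z.of_nat k) * m (Z.of_nat k)
  end.

Lemma sum_sq_nonneg m k : 0 <= sum_sq m k.
Proof. induction k; simpl; nia. Qed.

Lemma sum_sq_update f p v k : 0 <= p ->
  sum_sq (update f p v) k
  = sum_sq f k + (if p <? Z.of_nat k then v * v - f p * f p else 0).
Proof.
  intros Hp. induction k as [|k IH]; cbn [sum_sq].
  - destruct (Z.ltb_spec p (Z.of_nat 0)); simpl in *; lia.
  - rewrite IH, Nat2Z.inj_succ. unfold update.
    destruct (Z.eqb_spec (Z.of_nat k) p), (Z.ltb_spec p (Z.of_nat k)),
      (Z.ltb_spec p (Z.succ (Z.of_nat k))); subst; lia.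
Qed.

Definition window_exchange (n : Z) (m : Z -> Z) (r : Z) : Z -> Z :=
  update (update m ((r - 1) mod n) (m r - 1)) r (m ((r - 1) mod n) + 1).

Section WindowExchange.

Variables (n : Z) (m : Z -> Z) (S : Z -> Prop) (r : Z).
Hypotheses (hn : 2 <= n) (Hres : window_residues n m) (Hwin : window_of n m S)
  (Hr : 0 <= r < n) (Hgap : ~ S (m r - 1)).

Let i := (r - 1) mod n.
Let m' := window_exchange n m r.

Lemma exchange_index_range : 0 <= i < n.
Proof. apply Z.mod_pos_bound. lia. Qed.

Lemma exchange_index_succ : (i + 1) mod n = r.
Proof.
  unfold i. rewrite Zplus_mod_idemp_l. replace (r - 1 + 1) with r by ring.
  apply Z.mod_small. exact Hr.
Qed.

Lemma exchange_index_neq : i <> r.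
Proof.
  intros E. apply (mod_succ_neq n hn i).
  rewrite exchange_index_succ, Z.mod_small; [exact E|apply exchange_index_range].
Qed.

Lemma exchange_pred_mod : (m r - 1) mod n = i.
Proof.
  apply (mod_add_congr n _ _ (-1)). rewrite Hres by exact Hr.
  symmetry. apply Z.mod_small. exact Hr.
Qed.

Lemma exchange_gap : m i + 1 < m r.
Proof.
  apply Z.nle_gt. intros H. apply Hgap, Hwin. rewrite exchange_pred_mod. lia.
Qed.

Lemma exchange_at_i : m' i = m r - 1.
Proof.
  unfold m', window_exchange, update. fold i. rewrite Z.eqb_refl.
  destruct (Z.eqb_spec i r); [now destruct exchange_index_neq|reflexivity].
Qed.

Lemma exchange_at_r : m' r = m i + 1.
Proof. unfold m', window_exchange, update. fold i. now rewrite Z.eqb_refl. Qed.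

Lemma exchange_other x : x <> i -> x <> r -> m' x = m x.
Proof.
  intros Hi Hr'. unfold m', window_exchange, update. fold i.
  destruct (Z.eqb_spec x r), (Z.eqb_spec x i); congruence.
Qed.

Lemma exchange_residues : window_residues n m'.
Proof.
  pose proof exchange_index_range.
  intros x Hx. destruct (Z.eq_dec x i) as [->|Hxi].
  - rewrite exchange_at_i. exact exchange_pred_mod.
  - destruct (Z.eq_dec x r) as [->|Hxr].
    + rewrite exchange_at_r, <- exchange_index_succ. apply mod_add_congr.
      rewrite (Z.mod_small i) by lia. apply Hres. lia.
    + rewrite exchange_other by assumption. now apply Hres.
Qed.

Lemma exchange_window : window_of n m' (fun y => S (s_act n i y)).
Proof.
  pose proof exchange_index_range. pose proof exchange_index_succ.
  intros y. destruct (Z.eq_dec (y mod n) i) as [Hyi|Hyi].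
  - rewrite (s_act_succ n i y), (Hwin (y + 1)) by (rewrite (Z.mod_small i); lia).
    replace ((y + 1) mod n) with r.
    + rewrite Hyi, exchange_at_i. lia.
    + rewrite <- exchange_index_succ. apply mod_add_congr.
      rewrite Z.mod_small; lia.
  - destruct (Z.eq_dec (y mod n) r) as [Hyr|Hyr].
    + rewrite (s_act_pred n hn i y), (Hwin (y - 1)) by congruence.
      replace ((y - 1) mod n) with i.
      * rewrite Hyr, exchange_at_r. lia.
      * rewrite <- (Z.mod_small r n Hr) in Hyr.
        exact (eq_sym (mod_add_congr n _ _ (-1) Hyr)).
    + rewrite s_act_fix, exchange_other by (rewrite ?(Z.mod_small i); congruence).
      apply Hwin.
Qed.

Lemma exchange_sum_sq_lt : sum_sq m' (Z.to_nat n) < sum_sq m (Z.to_nat n).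
Proof.
  pose proof exchange_index_range. pose proof exchange_index_neq. pose proof exchange_gap.
  unfold m', window_exchange. fold i. rewrite !sum_sq_update by lia. rewrite Z2Nat.id by lia.
  replace (update m i (m r - 1) r) with (m r)
    by (unfold update; destruct (Z.eqb_spec r i); congruence).
  destruct (Z.ltb_spec i n), (Z.ltb_spec r n); nia.
Qed.

End WindowExchange.

Lemma window_nice n m S : 2 <= n ->
  window_residues n m -> window_of n m S -> exists a, nice n a S.
Proof.
  intros hn. revert S.
  induction m as [m IH] using (well_founded_induction
    (well_founded_ltof _ (fun m => Z.to_nat (sum_sq m (Z.to_nat n))))).
  intros S Hres Hwin.
  destruct (classic (forall r, 0 <= r < n -> S (m r - 1))) as [Hpred|Hgap].
  - exact (window_nice_of_pred_closed n m S hn Hres Hwin Hpred).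
  - apply not_all_ex_not in Hgap as [r Hr]. apply imply_to_and in Hr as [Hr Hgap].
    destruct (IH (window_exchange n m r))
      with (S := fun y => S (s_act n ((r - 1) mod n) y)) as [a Ha].
    + unfold ltof.
      pose proof (exchange_sum_sq_lt n m S r hn Hres Hwin Hr Hgap).
      pose proof (sum_sq_nonneg (window_exchange n m r) (Z.to_nat n)).
      lia.
    + eapply exchange_residues; eassumption.
    + eapply exchange_window; eassumption.
    + exists a. eapply nice_s_act; [exact hn|apply Z.mod_pos_bound; lia|exact Ha].
Qed.

Theorem lemma5p1 (n : Z) (hn : 2 <= n) (S : Z -> Prop) :
  (exists a : Z, nice n a S) <->
  ((forall b, S b -> S (b - n)) /\
   finite_set (fun b => S b /\ 0 < b) /\
   finite_set (fun b => b < 0 /\ ~ S b)).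
Proof.
  split.
  - intros [a Ha]. split; [|split].
    + exact (nice_sub_period n a S hn Ha).
    + exact (nice_finite_pos n a S Ha).
    + exact (nice_finite_neg_compl n a S hn Ha).
  - intros [Hper [Hpos Hneg]].
    destruct (window_exists n S hn Hper Hpos Hneg) as [m [Hres Hwin]].
    exact (window_nice n m S hn Hres Hwin).
Qed.
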